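(* Let $p_{0,0},p_{1,0}\in[0,1]$ with $p_{0,0}>p_{1,0}$ (positively correlated arm), $0\le\rho_0<\rho_1\le1$, and $K\ge1$ an integer. Then the belief updates $\gamma_0,\gamma_1,\gamma_2$ defined in the context are increasing in $\pi\in[0,1]$; moreover $\gamma_1$ is convex and $\gamma_0$ is concave, and $p_{1,0}\le\gamma_1(\pi)\le\gamma_0(\pi)\le p_{0,0}$ for all $\pi\in[0,1]$.
   Context: For $\pi\in[0,1]$ define $\gamma_1(\pi)=\frac{(1-\pi)\rho_1p_{1,0}+\pi\rho_0p_{0,0}}{\rho_1(1-\pi)+\rho_0\pi}$, $\gamma_0(\pi)=\frac{(1-\pi)(1-\rho_1)p_{1,0}+\pi(1-\rho_0)p_{0,0}}{(1-\rho_1)(1-\pi)+(1-\rho_0)\pi}$, $\gamma_2(\pi)=(p_{0,0}-p_{1,0})^K\pi+p_{1,0}\sum_{j=0}^{K-1}(p_{0,0}-p_{1,0})^j$. (These are the posterior probabilities of hidden state $0$ of a two-state Markov chain with transition probabilities $p_{i,0}$ from state $i$ to $0$, after respectively an ACK, a NACK, or no play; $\rho_i$ is the ACK probability in state $i$.) *)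

From mathcomp Require Import all_boot all_order all_algebra.
Set Implicit Arguments. Unset Strict Implicit. Unset Printing Implicit Defensive.
Import Order.TTheory GRing.Theory Num.Theory.
Local Open Scope ring_scope.

Section Beliefs.
Variable R : realFieldType.

Definition den1 (rho0 rho1 pi : R) : R := rho1 * (1 - pi) + rho0 * pi.
Definition den0 (rho0 rho1 pi : R) : R := (1 - rho1) * (1 - pi) + (1 - rho0) * pi.

(* posterior of state 0 after an ACK *)
Definition gamma1 (p00 p10 rho0 rho1 pi : R) : R :=
  ((1 - pi) * rho1 * p10 + pi * rho0 * p00) / den1 rho0 rho1 pi.

(* posterior of state 0 after a NACK *)
Definition gamma0 (p00 p10 rho0 rho1 pi : R) : R :=
  ((1 - pi) * (1 - rho1) * p10 + pi * (1 - rho0) * p00) / den0 rho0 rho1 pi.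

(* belief after K steps with no play *)
Definition gamma2 (p00 p10 : R) (K : nat) (pi : R) : R :=
  (p00 - p10) ^+ K * pi + p10 * \sum_(j < K) (p00 - p10) ^+ j.

Definition in01 (x : R) : Prop := 0 <= x /\ x <= 1.

Definition nondecreasing_on (D : R -> Prop) (f : R -> R) : Prop :=
  forall x y, D x -> D y -> x <= y -> f x <= f y.

Definition convex_on (D : R -> Prop) (f : R -> R) : Prop :=
  forall x y t, D x -> D y -> 0 <= t -> t <= 1 ->
    f (t * x + (1 - t) * y) <= t * f x + (1 - t) * f y.

Definition concave_on (D : R -> Prop) (f : R -> R) : Prop :=
  forall x y t, D x -> D y -> 0 <= t -> t <= 1 ->
    t * f x + (1 - t) * f y <= f (t * x + (1 - t) * y).

End Beliefs.

From mathcomp Require Import all_boot all_order all_algebra.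
From mathcomp Require Import ring lra.
Set Implicit Arguments. Unset Strict Implicit. Unset Printing Implicit Defensive.
Import Order.TTheory GRing.Theory Num.Theory.
Local Open Scope ring_scope.

(* The denominators of [gamma1] and [gamma0] are affine in [pi], with slopes
   [rho0 - rho1 < 0] and [rho1 - rho0 > 0], so both beliefs are Moebius maps
   [a + b / (d0 + d1 * pi)] with [b * d1 <= 0]: this gives monotonicity, and
   convexity of [1 / d] on [d > 0] (the harmonic-mean inequality) gives
   convexity of [gamma1] ([b >= 0]) and concavity of [gamma0] ([b <= 0]).
   The order [p10 <= gamma1 <= gamma0 <= p00] follows by cross-multiplying;
   e.g. [gamma0 - gamma1] has numerator [(p00 - p10) pi (1 - pi) (rho1 - rho0)]. *)

Section RealField.
Variable R : realFieldType.

Lemma comb_gt0 (u v t : R) : 0 < u -> 0 < v -> 0 <= t -> t <= 1 ->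
  0 < t * u + (1 - t) * v.
Proof. nra. Qed.

Lemma ler_inv_comb (u v t : R) : 0 < u -> 0 < v -> 0 <= t -> t <= 1 ->
  (t * u + (1 - t) * v)^-1 <= t / u + (1 - t) / v.
Proof.
move=> u_gt0 v_gt0 t_ge0 t_le1.
have w_gt0 : 0 < t * u + (1 - t) * v by exact: comb_gt0.
have gap : (t / u + (1 - t) / v) * (t * u + (1 - t) * v) - 1
         = t * (1 - t) * (u - v) ^+ 2 / (u * v).
  by field; rewrite !gt_eqF.
have gap_ge0 : 0 <= t * (1 - t) * (u - v) ^+ 2 / (u * v).
  by apply: divr_ge0; [apply: mulr_ge0; [nra | exact: sqr_ge0] | nra].
rewrite -div1r ler_pdivrMr //; lra.
Qed.

Lemma concave_onN (D : R -> Prop) (f : R -> R) :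
  convex_on D (fun x => - f x) -> concave_on D f.
Proof. by move=> cvx x y t Dx Dy t_ge0 t_le1; have := cvx x y t Dx Dy t_ge0 t_le1; lra. Qed.

Section Moebius.
Variables (d0 d1 : R) (D : R -> Prop).
Hypothesis den_gt0 : forall x, D x -> 0 < d0 + d1 * x.

Lemma moebius_nondecreasing (a b : R) (f : R -> R) :
  (forall x, 0 < d0 + d1 * x -> f x = a + b / (d0 + d1 * x)) ->
  b * d1 <= 0 -> nondecreasing_on D f.
Proof.
move=> fE bd1_le0 x y Dx Dy le_xy.
have dx_gt0 := den_gt0 Dx; have dy_gt0 := den_gt0 Dy.
rewrite !fE // lerD2l -subr_ge0.
have -> : b / (d0 + d1 * y) - b / (d0 + d1 * x)
        = (b * d1) * (x - y) / ((d0 + d1 * x) * (d0 + d1 * y)).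
  by field; rewrite !gt_eqF.
apply: divr_ge0; last exact/ltW/mulr_gt0.
by apply: mulr_le0; rewrite ?subr_le0.
Qed.

Lemma moebius_convex (a b : R) (f : R -> R) :
  (forall x, 0 < d0 + d1 * x -> f x = a + b / (d0 + d1 * x)) ->
  0 <= b -> convex_on D f.
Proof.
move=> fE b_ge0 x y t Dx Dy t_ge0 t_le1.
have dx_gt0 := den_gt0 Dx; have dy_gt0 := den_gt0 Dy.
have dE : d0 + d1 * (t * x + (1 - t) * y)
        = t * (d0 + d1 * x) + (1 - t) * (d0 + d1 * y) by ring.
rewrite fE ?dE ?comb_gt0 // !fE //.
have := ler_wpM2l b_ge0 (ler_inv_comb dx_gt0 dy_gt0 t_ge0 t_le1); lra.
Qed.

Lemma moebius_concave (a b : R) (f : R -> R) :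
  (forall x, 0 < d0 + d1 * x -> f x = a + b / (d0 + d1 * x)) ->
  b <= 0 -> concave_on D f.
Proof.
move=> fE b_le0; apply: concave_onN.
apply: (@moebius_convex (- a) (- b)); last by rewrite oppr_ge0.
by move=> x dx_gt0; rewrite fE // opprD mulNr.
Qed.

End Moebius.

Variables (p00 p10 rho0 rho1 : R).

Lemma den1E pi : den1 rho0 rho1 pi = rho1 + (rho0 - rho1) * pi.
Proof. by rewrite /den1; ring. Qed.

Lemma den0E pi : den0 rho0 rho1 pi = (1 - rho1) + (rho1 - rho0) * pi.
Proof. by rewrite /den0; ring. Qed.

Lemma den1_gt0 pi : 0 <= rho0 -> 0 <= rho1 -> in01 pi ->
  den1 rho0 rho1 pi != 0 -> 0 < den1 rho0 rho1 pi.
Proof. by move=> ? ? [? ?] ?; rewrite lt_def; apply/andP; split => //; rewrite /den1; nra. Qed.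

Lemma den0_gt0 pi : rho0 <= 1 -> rho1 <= 1 -> in01 pi ->
  den0 rho0 rho1 pi != 0 -> 0 < den0 rho0 rho1 pi.
Proof. by move=> ? ? [? ?] ?; rewrite lt_def; apply/andP; split => //; rewrite /den0; nra. Qed.

Lemma gamma1_moebius pi : rho0 != rho1 -> rho1 + (rho0 - rho1) * pi != 0 ->
  gamma1 p00 p10 rho0 rho1 pi =
  (rho1 * p10 - rho0 * p00) / (rho1 - rho0)
  + rho1 * rho0 * (p00 - p10) / (rho1 - rho0) / (rho1 + (rho0 - rho1) * pi).
Proof.
move=> /negPf neq_rho den_neq0; rewrite /gamma1 /den1.
by field; rewrite den_neq0 subr_eq0 eq_sym neq_rho.
Qed.

Lemma gamma0_moebius pi : rho0 != rho1 -> (1 - rho1) + (rho1 - rho0) * pi != 0 ->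
  gamma0 p00 p10 rho0 rho1 pi =
  ((1 - rho0) * p00 - (1 - rho1) * p10) / (rho1 - rho0)
  + - ((1 - rho1) * (1 - rho0) * (p00 - p10) / (rho1 - rho0))
      / ((1 - rho1) + (rho1 - rho0) * pi).
Proof.
move=> /negPf neq_rho den_neq0; rewrite /gamma0 /den0.
by field; rewrite den_neq0 subr_eq0 eq_sym neq_rho.
Qed.

Lemma gamma2_nondecreasing (D : R -> Prop) K :
  p10 <= p00 -> nondecreasing_on D (gamma2 p00 p10 K).
Proof.
move=> le_p x y _ _ le_xy; rewrite /gamma2 lerD2r.
by rewrite ler_wpM2l // exprn_ge0 // subr_ge0.
Qed.

Hypotheses (le_p : p10 <= p00) (rho0_ge0 : 0 <= rho0) (le_rho : rho0 <= rho1)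
  (rho1_le1 : rho1 <= 1).

Lemma gamma1_ge pi : in01 pi -> 0 < den1 rho0 rho1 pi ->
  p10 <= gamma1 p00 p10 rho0 rho1 pi.
Proof.
move=> [pi_ge0 _] den_gt0; rewrite /gamma1 ler_pdivlMr //.
have gap : (1 - pi) * rho1 * p10 + pi * rho0 * p00 - p10 * den1 rho0 rho1 pi
         = pi * rho0 * (p00 - p10) by rewrite /den1; ring.
have : 0 <= pi * rho0 * (p00 - p10) by rewrite !mulr_ge0 ?subr_ge0.
lra.
Qed.

Lemma gamma0_le pi : in01 pi -> 0 < den0 rho0 rho1 pi ->
  gamma0 p00 p10 rho0 rho1 pi <= p00.
Proof.
move=> [_ pi_le1] den_gt0; rewrite /gamma0 ler_pdivrMr //.
have gap : p00 * den0 rho0 rho1 pi - ((1 - pi) * (1 - rho1) * p10 + pi * (1 - rho0) * p00)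
         = (1 - pi) * (1 - rho1) * (p00 - p10) by rewrite /den0; ring.
have : 0 <= (1 - pi) * (1 - rho1) * (p00 - p10) by rewrite !mulr_ge0 ?subr_ge0.
lra.
Qed.

Lemma gamma1_le_gamma0 pi : in01 pi ->
  0 < den1 rho0 rho1 pi -> 0 < den0 rho0 rho1 pi ->
  gamma1 p00 p10 rho0 rho1 pi <= gamma0 p00 p10 rho0 rho1 pi.
Proof.
move=> [pi_ge0 pi_le1] den1_gt0 den0_gt0.
rewrite /gamma1 /gamma0 ler_pdivrMr // [leRHS]mulrAC ler_pdivlMr //.
have gap : ((1 - pi) * (1 - rho1) * p10 + pi * (1 - rho0) * p00) * den1 rho0 rho1 pi
         - ((1 - pi) * rho1 * p10 + pi * rho0 * p00) * den0 rho0 rho1 pi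
         = (p00 - p10) * pi * (1 - pi) * (rho1 - rho0) by rewrite /den1 /den0; ring.
have : 0 <= (p00 - p10) * pi * (1 - pi) * (rho1 - rho0) by rewrite !mulr_ge0 ?subr_ge0.
lra.
Qed.

End RealField.

Theorem lemma2 (R : realFieldType) (p00 p10 rho0 rho1 : R) (K : nat) :
  0 <= p10 -> p10 < p00 -> p00 <= 1 ->
  0 <= rho0 -> rho0 < rho1 -> rho1 <= 1 ->
  (1 <= K)%N ->
  let D1 := fun pi : R => in01 pi /\ den1 rho0 rho1 pi != 0 in
  let D0 := fun pi : R => in01 pi /\ den0 rho0 rho1 pi != 0 in
  [/\ [/\ nondecreasing_on D1 (gamma1 p00 p10 rho0 rho1),
          nondecreasing_on D0 (gamma0 p00 p10 rho0 rho1) &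
          nondecreasing_on (@in01 R) (gamma2 p00 p10 K)],
      convex_on D1 (gamma1 p00 p10 rho0 rho1),
      concave_on D0 (gamma0 p00 p10 rho0 rho1) &
      forall pi : R, D1 pi -> D0 pi ->
        [/\ p10 <= gamma1 p00 p10 rho0 rho1 pi,
            gamma1 p00 p10 rho0 rho1 pi <= gamma0 p00 p10 rho0 rho1 pi &
            gamma0 p00 p10 rho0 rho1 pi <= p00]].
Proof.
move=> _ lt_p _ rho0_ge0 lt_rho rho1_le1 _ D1 D0.
have le_p := ltW lt_p; have le_rho := ltW lt_rho.
have neq_rho : rho0 != rho1 by rewrite lt_eqF.
have D1_gt0 pi : D1 pi -> 0 < den1 rho0 rho1 pi.
  by case=> ? ?; apply: den1_gt0 => //; lra.
have D0_gt0 pi : D0 pi -> 0 < den0 rho0 rho1 pi.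
  by case=> ? ?; apply: den0_gt0 => //; lra.
have g1E x (d_gt0 : 0 < rho1 + (rho0 - rho1) * x) :=
  gamma1_moebius p00 p10 neq_rho (lt0r_neq0 d_gt0).
have g0E x (d_gt0 : 0 < (1 - rho1) + (rho1 - rho0) * x) :=
  gamma0_moebius p00 p10 neq_rho (lt0r_neq0 d_gt0).
have D1_pos x : D1 x -> 0 < rho1 + (rho0 - rho1) * x by rewrite -den1E; apply: D1_gt0.
have D0_pos x : D0 x -> 0 < (1 - rho1) + (rho1 - rho0) * x by rewrite -den0E; apply: D0_gt0.
have B1_ge0 : 0 <= rho1 * rho0 * (p00 - p10) / (rho1 - rho0).
  by rewrite divr_ge0 ?mulr_ge0 ?subr_ge0 //; lra.
have B0_ge0 : 0 <= (1 - rho1) * (1 - rho0) * (p00 - p10) / (rho1 - rho0).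
  by rewrite divr_ge0 ?mulr_ge0 ?subr_ge0 //; lra.
split; [split | | |].
- by apply: (moebius_nondecreasing D1_pos g1E); rewrite mulr_ge0_le0 // subr_le0.
- by apply: (moebius_nondecreasing D0_pos g0E); rewrite mulr_le0_ge0 ?oppr_le0 // subr_ge0.
- exact: gamma2_nondecreasing.
- exact: (moebius_convex D1_pos g1E).
- by apply: (moebius_concave D0_pos g0E); rewrite oppr_le0.
- move=> pi D1pi D0pi; have [pi01 _] := D1pi.
  have d1_gt0 := D1_gt0 _ D1pi; have d0_gt0 := D0_gt0 _ D0pi.
  by split; [apply: gamma1_ge | apply: gamma1_le_gamma0 | apply: gamma0_le].
Qed.
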